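(* Let $(T,[\cdot,\cdot],[\cdot,\cdot,\cdot],\alpha)$ be a Hom-Lie-Yamaguti algebra and $(\rho,D,\theta)$ a representation of it on a Hom-vector space $(V,\beta)$. Then every (2,3)-coboundary is a (2,3)-cocycle, i.e. $B^2(T,V)\times B^3(T,V)\subseteq Z^2(T,V)\times Z^3(T,V)$.
   Context: Throughout, vector spaces are over an algebraically closed field $\mathbb{K}$ of characteristic different from 2 and 3. A Hom-vector space is a pair $(V,\beta)$ with $\beta:V\to V$ linear. A Hom-Lie-Yamaguti algebra (HLYA) is a vector space $T$ with a linear map $\alpha:T\to T$, a bilinear map $[\cdot,\cdot]$ and a trilinear map $[\cdot,\cdot,\cdot]$ on $T$ such that for all $x_i,y_i\in T$: (HLY01) $\alpha([x_1,x_2])=[\alpha(x_1),\alpha(x_2)]$; (HLY02) $\alpha([x_1,x_2,x_3])=[\alpha(x_1),\alpha(x_2),\alpha(x_3)]$; (HLY1) $[x_1,x_2]+[x_2,x_1]=0$; (HLY2) $[x_1,x_2,x_3]+[x_2,x_1,x_3]=0$; (HLY3) $\sum_{\mathrm{cyc}(x_1,x_2,x_3)}([[x_1,x_2],\alpha(x_3)]+[x_1,x_2,x_3])=0$; (HLY4) $[[x_1,x_2],\alpha(x_3),\alpha(y_1)]+[[x_2,x_3],\alpha(x_1),\alpha(y_1)]+[[x_3,x_1],\alpha(x_2),\alpha(y_1)]=0$; (HLY5) $[\alpha(x_1),\alpha(x_2),[y_1,y_2]]=[[x_1,x_2,y_1],\alpha^2(y_2)]+[\alpha^2(y_1),[x_1,x_2,y_2]]$;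 (HLY6) $[\alpha^2(x_1),\alpha^2(x_2),[y_1,y_2,y_3]]=[[x_1,x_2,y_1],\alpha^2(y_2),\alpha^2(y_3)]+[\alpha^2(y_1),[x_1,x_2,y_2],\alpha^2(y_3)]+[\alpha^2(y_1),\alpha^2(y_2),[x_1,x_2,y_3]]$. A representation of $(T,\alpha)$ on $(V,\beta)$ is a linear map $\rho:T\to\mathrm{End}(V)$ and bilinear maps $D,\theta:T\times T\to\mathrm{End}(V)$ satisfying, for all $x_i,y_i\in T$: (HR01) $\rho(\alpha(x_1))\circ\beta=\beta\circ\rho(x_1)$; (HR02) $D(\alpha(x_1),\alpha(x_2))\circ\beta=\beta\circ D(x_1,x_2)$; (HR03) $\theta(\alpha(x_1),\alpha(x_2))\circ\beta=\beta\circ\theta(x_1,x_2)$; (HR31) $D(x_1,x_2)-\theta(x_2,x_1)+\theta(x_1,x_2)+\rho([x_1,x_2])\circ\beta-\rho(\alpha(x_1))\rho(x_2)+\rho(\alpha(x_2))\rho(x_1)=0$; (HR41) $D([x_1,x_2],\alpha(x_3))+D([x_2,x_3],\alpha(x_1))+D([x_3,x_1],\alpha(x_2))=0$; (HR42) $\theta([x_1,x_2],\alpha(y_1))\circ\beta=\theta(\alpha(x_1),\alpha(y_1))\rho(x_2)-\theta(\alpha(x_2),\alpha(y_1))\rho(x_1)$; (HR51) $D(\alpha(x_1),\alpha(x_2))\rho(y_2)=\rho(\alpha^2(y_2))D(x_1,x_2)+\rho([x_1,x_2,y_2])\circ\beta^2$; (HR52) $\theta(\alpha(x_1),[y_1,y_2])\circ\beta=\rho(\alpha^2(y_1))\theta(x_1,y_2)-\rho(\alpha^2(y_2))\theta(x_1,y_1)$;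 (HR61) $D(\alpha^2(x_1),\alpha^2(x_2))\theta(y_1,y_2)=\theta(\alpha^2(y_1),\alpha^2(y_2))D(x_1,x_2)+\theta([x_1,x_2,y_1],\alpha^2(y_2))\circ\beta^2+\theta(\alpha^2(y_1),[x_1,x_2,y_2])\circ\beta^2$; (HR62) $\theta(\alpha^2(x_1),[y_1,y_2,y_3])\circ\beta^2=\theta(\alpha^2(y_2),\alpha^2(y_3))\theta(x_1,y_1)-\theta(\alpha^2(y_1),\alpha^2(y_3))\theta(x_1,y_2)+D(\alpha^2(y_1),\alpha^2(y_2))\theta(x_1,y_3)$. $C^2(T,V)$ is the space of bilinear $\nu:T\times T\to V$ with $\nu(x_1,x_2)=-\nu(x_2,x_1)$ and (CC01) $\nu(\alpha(x_1),\alpha(x_2))=\beta(\nu(x_1,x_2))$. $C^3(T,V)$ is the space of trilinear $\omega:T^3\to V$ with $\omega(x_1,x_2,x_3)=-\omega(x_2,x_1,x_3)$ and (CC02) $\omega(\alpha(x_1),\alpha(x_2),\alpha(x_3))=\beta(\omega(x_1,x_2,x_3))$. A pair $(\nu,\omega)\in C^2(T,V)\times C^3(T,V)$ is a (2,3)-cocycle if for all $x_i,y_i\in T$: (CC1) $\sum_{\mathrm{cyc}(x_1,x_2,x_3)}\big(\omega(x_1,x_2,x_3)-\rho(\alpha(x_1))\nu(x_2,x_3)+\nu([x_1,x_2],\alpha(x_3))\big)=0$; (CC2) $\sum_{\mathrm{cyc}(x_1,x_2,x_3)}\big(\theta(\alpha(x_1),\alpha(y_1))\nu(x_2,x_3)+\omega([x_1,x_2],\alpha(x_3),\alpha(y_1))\big)=0$;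 (CC3) $\omega(\alpha(x_1),\alpha(x_2),[y_1,y_2])+D(\alpha(x_1),\alpha(x_2))\nu(y_1,y_2)=\nu([x_1,x_2,y_1],\alpha^2(y_2))+\nu(\alpha^2(y_1),[x_1,x_2,y_2])+\rho(\alpha^2(y_1))\omega(x_1,x_2,y_2)-\rho(\alpha^2(y_2))\omega(x_1,x_2,y_1)$; (CC4) $\omega(\alpha^2(x_1),\alpha^2(x_2),[y_1,y_2,y_3])+D(\alpha^2(x_1),\alpha^2(x_2))\omega(y_1,y_2,y_3)=\omega([x_1,x_2,y_1],\alpha^2(y_2),\alpha^2(y_3))+\omega(\alpha^2(y_1),[x_1,x_2,y_2],\alpha^2(y_3))+\omega(\alpha^2(y_1),\alpha^2(y_2),[x_1,x_2,y_3])+\theta(\alpha^2(y_2),\alpha^2(y_3))\omega(x_1,x_2,y_1)-\theta(\alpha^2(y_1),\alpha^2(y_3))\omega(x_1,x_2,y_2)+D(\alpha^2(y_1),\alpha^2(y_2))\omega(x_1,x_2,y_3)$. The space of (2,3)-cocycles is $Z^2(T,V)\times Z^3(T,V)$. A pair $(\nu,\omega)\in C^2(T,V)\times C^3(T,V)$ is a (2,3)-coboundary if there is a linear map $f:T\to V$ with (BB01) $f\circ\alpha=\beta\circ f$, (BB1) $\nu(x_1,x_2)=\rho(x_1)f(x_2)-\rho(x_2)f(x_1)-f([x_1,x_2])$, and (BB2) $\omega(x_1,x_2,x_3)=\theta(x_2,x_3)f(x_1)-\theta(x_1,x_3)f(x_2)+D(x_1,x_2)f(x_3)-f([x_1,x_2,x_3])$.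 The space of (2,3)-coboundaries is $B^2(T,V)\times B^3(T,V)$. *)

From HB Require Import structures.
From mathcomp Require Import all_boot all_order all_algebra.
Set Implicit Arguments. Unset Strict Implicit. Unset Printing Implicit Defensive.
Import GRing.Theory.
Local Open Scope ring_scope.

(* Vector spaces over a field K are
   modelled by lmodType K; linear, bilinear, trilinear maps by plain functions
   with linearity hypotheses; End(V)-valued maps by curried functions
   T -> V -> V (etc.) linear in every argument. *)

Section Defs.
Variable K : fieldType.

Definition lin (U W : lmodType K) (f : U -> W) : Prop :=
  forall (a : K) (x y : U), f (a *: x + y) = a *: f x + f y.

Definition bilin (U1 U2 W : lmodType K) (f : U1 -> U2 -> W) : Prop :=
  (forall x, lin (f x)) /\ (forall y, lin (fun x => f x y)).

Definition trilin (U1 U2 U3 W : lmodType K) (f : U1 -> U2 -> U3 -> W) : Prop :=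
  (forall x y, lin (f x y)) /\ (forall x z, lin (fun y => f x y z))
  /\ (forall y z, lin (fun x => f x y z)).

Variables (T V : lmodType K).

Definition is_HLYA (alpha : T -> T) (br : T -> T -> T) (tr : T -> T -> T -> T)
  : Prop :=
  ( lin alpha /\ bilin br /\ trilin tr /\
   (forall x1 x2, alpha (br x1 x2) = br (alpha x1) (alpha x2)) /\
   (forall x1 x2 x3,
        alpha (tr x1 x2 x3) = tr (alpha x1) (alpha x2) (alpha x3)) /\
   (forall x1 x2, br x1 x2 + br x2 x1 = 0) /\
   (forall x1 x2 x3, tr x1 x2 x3 + tr x2 x1 x3 = 0) /\
   (forall x1 x2 x3,
        (br (br x1 x2) (alpha x3) + tr x1 x2 x3)
      + (br (br x2 x3) (alpha x1) + tr x2 x3 x1)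
      + (br (br x3 x1) (alpha x2) + tr x3 x1 x2) = 0) /\
   (forall x1 x2 x3 y1,
        tr (br x1 x2) (alpha x3) (alpha y1)
      + tr (br x2 x3) (alpha x1) (alpha y1)
      + tr (br x3 x1) (alpha x2) (alpha y1) = 0) /\
   (forall x1 x2 y1 y2,
        tr (alpha x1) (alpha x2) (br y1 y2)
      = br (tr x1 x2 y1) (alpha (alpha y2))
      + br (alpha (alpha y1)) (tr x1 x2 y2)) /\
   (forall x1 x2 y1 y2 y3,
        tr (alpha (alpha x1)) (alpha (alpha x2)) (tr y1 y2 y3)
      = tr (tr x1 x2 y1) (alpha (alpha y2)) (alpha (alpha y3))
      + tr (alpha (alpha y1)) (tr x1 x2 y2) (alpha (alpha y3))
      + tr (alpha (alpha y1)) (alpha (alpha y2)) (tr x1 x2 y3))).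

(* Representation (rho, D, theta) of (T, alpha) on (V, beta); identities of
   endomorphisms of V are stated pointwise on v : V, composition being
   function composition. *)
Definition is_rep (alpha : T -> T) (br : T -> T -> T) (tr : T -> T -> T -> T)
  (beta : V -> V) (rho : T -> V -> V) (D theta : T -> T -> V -> V) : Prop :=
  ( lin beta /\
   (forall x, lin (rho x)) /\ (forall v, lin (fun x => rho x v)) /\
   (forall x y, lin (D x y)) /\ (forall v, bilin (fun x y => D x y v)) /\
   (forall x y, lin (theta x y)) /\ (forall v, bilin (fun x y => theta x y v)) /\
   (forall x1 v, rho (alpha x1) (beta v) = beta (rho x1 v)) /\
   (forall x1 x2 v,
        D (alpha x1) (alpha x2) (beta v) = beta (D x1 x2 v)) /\
   (forall x1 x2 v,
        theta (alpha x1) (alpha x2) (beta v) = beta (theta x1 x2 v)) /\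
   (forall x1 x2 v,
        D x1 x2 v - theta x2 x1 v + theta x1 x2 v + rho (br x1 x2) (beta v)
      - rho (alpha x1) (rho x2 v) + rho (alpha x2) (rho x1 v) = 0) /\
   (forall x1 x2 x3 v,
        D (br x1 x2) (alpha x3) v + D (br x2 x3) (alpha x1) v
      + D (br x3 x1) (alpha x2) v = 0) /\
   (forall x1 x2 y1 v,
        theta (br x1 x2) (alpha y1) (beta v)
      = theta (alpha x1) (alpha y1) (rho x2 v)
      - theta (alpha x2) (alpha y1) (rho x1 v)) /\
   (forall x1 x2 y2 v,
        D (alpha x1) (alpha x2) (rho y2 v)
      = rho (alpha (alpha y2)) (D x1 x2 v)
      + rho (tr x1 x2 y2) (beta (beta v))) /\
   (forall x1 y1 y2 v,
        theta (alpha x1) (br y1 y2) (beta v)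
      = rho (alpha (alpha y1)) (theta x1 y2 v)
      - rho (alpha (alpha y2)) (theta x1 y1 v)) /\
   (forall x1 x2 y1 y2 v,
        D (alpha (alpha x1)) (alpha (alpha x2)) (theta y1 y2 v)
      = theta (alpha (alpha y1)) (alpha (alpha y2)) (D x1 x2 v)
      + theta (tr x1 x2 y1) (alpha (alpha y2)) (beta (beta v))
      + theta (alpha (alpha y1)) (tr x1 x2 y2) (beta (beta v))) /\
   (forall x1 y1 y2 y3 v,
        theta (alpha (alpha x1)) (tr y1 y2 y3) (beta (beta v))
      = theta (alpha (alpha y2)) (alpha (alpha y3)) (theta x1 y1 v)
      - theta (alpha (alpha y1)) (alpha (alpha y3)) (theta x1 y2 v)
      + D (alpha (alpha y1)) (alpha (alpha y2)) (theta x1 y3 v))).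

Definition C2 (alpha : T -> T) (beta : V -> V) (nu : T -> T -> V) : Prop :=
  ( bilin nu /\ (forall x1 x2, nu x1 x2 = - nu x2 x1) /\
   (forall x1 x2, nu (alpha x1) (alpha x2) = beta (nu x1 x2))).

Definition C3 (alpha : T -> T) (beta : V -> V) (omega : T -> T -> T -> V)
  : Prop :=
  ( trilin omega /\ (forall x1 x2 x3, omega x1 x2 x3 = - omega x2 x1 x3) /\
   (forall x1 x2 x3,
        omega (alpha x1) (alpha x2) (alpha x3) = beta (omega x1 x2 x3))).

Definition cocycle23 (alpha : T -> T) (br : T -> T -> T)
  (tr : T -> T -> T -> T) (beta : V -> V) (rho : T -> V -> V)
  (D theta : T -> T -> V -> V) (nu : T -> T -> V) (omega : T -> T -> T -> V)
  : Prop :=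
  ( C2 alpha beta nu /\ C3 alpha beta omega /\
   (forall x1 x2 x3,
        (omega x1 x2 x3 - rho (alpha x1) (nu x2 x3) + nu (br x1 x2) (alpha x3))
      + (omega x2 x3 x1 - rho (alpha x2) (nu x3 x1) + nu (br x2 x3) (alpha x1))
      + (omega x3 x1 x2 - rho (alpha x3) (nu x1 x2) + nu (br x3 x1) (alpha x2))
      = 0) /\
   (forall x1 x2 x3 y1,
        (theta (alpha x1) (alpha y1) (nu x2 x3)
           + omega (br x1 x2) (alpha x3) (alpha y1))
      + (theta (alpha x2) (alpha y1) (nu x3 x1)
           + omega (br x2 x3) (alpha x1) (alpha y1))
      + (theta (alpha x3) (alpha y1) (nu x1 x2)
           + omega (br x3 x1) (alpha x2) (alpha y1)) = 0) /\
   (forall x1 x2 y1 y2,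
        omega (alpha x1) (alpha x2) (br y1 y2)
      + D (alpha x1) (alpha x2) (nu y1 y2)
      = nu (tr x1 x2 y1) (alpha (alpha y2))
      + nu (alpha (alpha y1)) (tr x1 x2 y2)
      + rho (alpha (alpha y1)) (omega x1 x2 y2)
      - rho (alpha (alpha y2)) (omega x1 x2 y1)) /\
   (forall x1 x2 y1 y2 y3,
        omega (alpha (alpha x1)) (alpha (alpha x2)) (tr y1 y2 y3)
      + D (alpha (alpha x1)) (alpha (alpha x2)) (omega y1 y2 y3)
      = omega (tr x1 x2 y1) (alpha (alpha y2)) (alpha (alpha y3))
      + omega (alpha (alpha y1)) (tr x1 x2 y2) (alpha (alpha y3))
      + omega (alpha (alpha y1)) (alpha (alpha y2)) (tr x1 x2 y3)
      + theta (alpha (alpha y2)) (alpha (alpha y3)) (omega x1 x2 y1)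
      - theta (alpha (alpha y1)) (alpha (alpha y3)) (omega x1 x2 y2)
      + D (alpha (alpha y1)) (alpha (alpha y2)) (omega x1 x2 y3))).

Definition coboundary23 (alpha : T -> T) (br : T -> T -> T)
  (tr : T -> T -> T -> T) (beta : V -> V) (rho : T -> V -> V)
  (D theta : T -> T -> V -> V) (nu : T -> T -> V) (omega : T -> T -> T -> V)
  : Prop :=
  ( C2 alpha beta nu /\ C3 alpha beta omega /\
   exists f : T -> V,
     ( lin f /\
      (forall x, f (alpha x) = beta (f x)) /\
      (forall x1 x2,
           nu x1 x2 = rho x1 (f x2) - rho x2 (f x1) - f (br x1 x2)) /\
      (forall x1 x2 x3,
           omega x1 x2 x3 = theta x2 x3 (f x1) - theta x1 x3 (f x2)
                          + D x1 x2 (f x3) - f (tr x1 x2 x3)))).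

End Defs.

From HB Require Import structures.
From mathcomp Require Import all_boot all_order all_algebra.
From mathcomp Require Import ring.
Import GRing.Theory.
Local Open Scope ring_scope.

(* Substituting the coboundary formulas for nu and omega, each cocycle
   condition becomes a linear combination of the axioms: CC1 of HR31 and
   HLY3, CC2 of HR41, HR42 and HLY4, CC3 of HR51, HR52 and HLY5, and CC4 of
   HR61, HR62, HLY6 and the identity D_comp_D, which expresses that D acts by
   derivations of D; D_comp_D itself follows from HR31 (solved for D), HR51,
   HR61 and the compatibilities of alpha and beta. *)

Section LinearMaps.
Context {K : fieldType} {U W : lmodType K} {g : U -> W}.
Hypothesis g_lin : lin g.

Lemma linD x y : g (x + y) = g x + g y.
Proof. by move: (g_lin 1 x y); rewrite !scale1r. Qed.

Lemma lin0 : g 0 = 0.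
Proof. by apply: (@addrI _ (g 0)); rewrite -linD !addr0. Qed.

Lemma linN x : g (- x) = - g x.
Proof. by move: (g_lin (-1) x 0); rewrite lin0 !addr0 !scaleN1r. Qed.

End LinearMaps.

(* Z + V with V * V = 0 is a commutative ring into which V embeds additively;
   this lets the ring tactic prove identities of abelian groups. *)
Section SquareZeroExtension.
Variable V : zmodType.

Definition zext := (int * V)%type.
HB.instance Definition _ := GRing.Zmodule.on zext.

Definition zext_mul (p q : zext) : zext := (p.1 * q.1, p.2 *~ q.1 + q.2 *~ p.1).
Definition zext_one : zext := (1, 0).

Lemma zext_mulA : associative zext_mul.
Proof.
move=> [a v] [b w] [c u]; rewrite /zext_mul /=; congr pair; first by rewrite mulrA.
by rewrite !mulrzDl -!mulrzA !(mulrC b) !(mulrC a) addrA.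
Qed.

Lemma zext_mulC : commutative zext_mul.
Proof. by move=> [a v] [b w]; rewrite /zext_mul /= mulrC addrC. Qed.

Lemma zext_mul1 : left_id zext_one zext_mul.
Proof. by move=> [a v]; rewrite /zext_mul /= mul1r mul0rz add0r mulr1z. Qed.

Lemma zext_mulDl : left_distributive zext_mul +%R.
Proof.
move=> [a v] [b w] [c u]; rewrite /zext_mul /=; congr pair; first by rewrite mulrDl.
by rewrite mulrzDl mulrzDr addrACA.
Qed.

Lemma zext_one_neq0 : zext_one != 0.
Proof. by rewrite /zext_one xpair_eqE negb_and. Qed.

HB.instance Definition _ := GRing.Zmodule_isComNzRing.Build zext
  zext_mulA zext_mulC zext_mul1 zext_mulDl zext_one_neq0.

Definition zext_of (v : V) : zext := (0, v).

Lemma zext_ofD x y : zext_of (x + y) = zext_of x + zext_of y.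
Proof. by rewrite /zext_of; congr pair; rewrite addr0. Qed.

Lemma zext_ofN x : zext_of (- x) = - zext_of x.
Proof. by rewrite /zext_of; congr pair; rewrite oppr0. Qed.

Lemma zext_of0 : zext_of 0 = 0.
Proof. by []. Qed.

Lemma zext_of_inj : injective zext_of.
Proof. by move=> x y []. Qed.

End SquareZeroExtension.

Ltac zmodule_ring :=
  apply: zext_of_inj; rewrite ?(zext_ofD, zext_ofN, zext_of0); ring.

Lemma eq_of_sub_eq {V : zmodType} {c d a b : V} : c = d -> a - b = c - d -> a = b.
Proof. by move=> -> /eqP; rewrite subrr subr_eq0 => /eqP. Qed.

Lemma congr_add {V : zmodType} {a b c d : V} : a = b -> c = d -> a + c = b + d.
Proof. by move=> -> ->. Qed.

Section Coboundary.
Variables (K : fieldType) (T V : lmodType K).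
Variables (alpha : T -> T) (br : T -> T -> T) (tr : T -> T -> T -> T).
Variables (beta : V -> V) (rho : T -> V -> V) (D theta : T -> T -> V -> V).

Hypothesis HLY01 : forall x1 x2, alpha (br x1 x2) = br (alpha x1) (alpha x2).
Hypothesis HLY02 : forall x1 x2 x3,
  alpha (tr x1 x2 x3) = tr (alpha x1) (alpha x2) (alpha x3).
Hypothesis HLY3 : forall x1 x2 x3,
    (br (br x1 x2) (alpha x3) + tr x1 x2 x3)
  + (br (br x2 x3) (alpha x1) + tr x2 x3 x1)
  + (br (br x3 x1) (alpha x2) + tr x3 x1 x2) = 0.
Hypothesis HLY4 : forall x1 x2 x3 y1,
    tr (br x1 x2) (alpha x3) (alpha y1)
  + tr (br x2 x3) (alpha x1) (alpha y1)
  + tr (br x3 x1) (alpha x2) (alpha y1) = 0.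
Hypothesis HLY5 : forall x1 x2 y1 y2,
  tr (alpha x1) (alpha x2) (br y1 y2)
  = br (tr x1 x2 y1) (alpha (alpha y2)) + br (alpha (alpha y1)) (tr x1 x2 y2).
Hypothesis HLY6 : forall x1 x2 y1 y2 y3,
  tr (alpha (alpha x1)) (alpha (alpha x2)) (tr y1 y2 y3)
  = tr (tr x1 x2 y1) (alpha (alpha y2)) (alpha (alpha y3))
  + tr (alpha (alpha y1)) (tr x1 x2 y2) (alpha (alpha y3))
  + tr (alpha (alpha y1)) (alpha (alpha y2)) (tr x1 x2 y3).

Hypothesis rho_lin : forall x, lin (rho x).
Hypothesis rho_linl : forall v, lin (fun x => rho x v).
Hypothesis D_lin : forall x y, lin (D x y).
Hypothesis theta_lin : forall x y, lin (theta x y).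

Hypothesis HR01 : forall x1 v, rho (alpha x1) (beta v) = beta (rho x1 v).
Hypothesis HR02 : forall x1 x2 v,
  D (alpha x1) (alpha x2) (beta v) = beta (D x1 x2 v).
Hypothesis HR31 : forall x1 x2 v,
  D x1 x2 v - theta x2 x1 v + theta x1 x2 v + rho (br x1 x2) (beta v)
  - rho (alpha x1) (rho x2 v) + rho (alpha x2) (rho x1 v) = 0.
Hypothesis HR41 : forall x1 x2 x3 v,
  D (br x1 x2) (alpha x3) v + D (br x2 x3) (alpha x1) v
  + D (br x3 x1) (alpha x2) v = 0.
Hypothesis HR42 : forall x1 x2 y1 v,
  theta (br x1 x2) (alpha y1) (beta v)
  = theta (alpha x1) (alpha y1) (rho x2 v) - theta (alpha x2) (alpha y1) (rho x1 v).
Hypothesis HR51 : forall x1 x2 y2 v,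
  D (alpha x1) (alpha x2) (rho y2 v)
  = rho (alpha (alpha y2)) (D x1 x2 v) + rho (tr x1 x2 y2) (beta (beta v)).
Hypothesis HR52 : forall x1 y1 y2 v,
  theta (alpha x1) (br y1 y2) (beta v)
  = rho (alpha (alpha y1)) (theta x1 y2 v) - rho (alpha (alpha y2)) (theta x1 y1 v).
Hypothesis HR61 : forall x1 x2 y1 y2 v,
  D (alpha (alpha x1)) (alpha (alpha x2)) (theta y1 y2 v)
  = theta (alpha (alpha y1)) (alpha (alpha y2)) (D x1 x2 v)
  + theta (tr x1 x2 y1) (alpha (alpha y2)) (beta (beta v))
  + theta (alpha (alpha y1)) (tr x1 x2 y2) (beta (beta v)).
Hypothesis HR62 : forall x1 y1 y2 y3 v,
  theta (alpha (alpha x1)) (tr y1 y2 y3) (beta (beta v))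
  = theta (alpha (alpha y2)) (alpha (alpha y3)) (theta x1 y1 v)
  - theta (alpha (alpha y1)) (alpha (alpha y3)) (theta x1 y2 v)
  + D (alpha (alpha y1)) (alpha (alpha y2)) (theta x1 y3 v).

Let rhoD x := linD (rho_lin x).
Let rhoN x := linN (rho_lin x).
Let DD x y := linD (D_lin x y).
Let DN x y := linN (D_lin x y).
Let thetaD x y := linD (theta_lin x y).
Let thetaN x y := linN (theta_lin x y).

Lemma D_expand x y v :
  D x y v = theta y x v - theta x y v - rho (br x y) (beta v)
            + rho (alpha x) (rho y v) - rho (alpha y) (rho x v).
Proof. by apply: (eq_of_sub_eq (HR31 x y v)); zmodule_ring. Qed.

Lemma D_comp_D x1 x2 y1 y2 v :
  D (alpha (alpha x1)) (alpha (alpha x2)) (D y1 y2 v)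
  = D (tr x1 x2 y1) (alpha (alpha y2)) (beta (beta v))
  + D (alpha (alpha y1)) (tr x1 x2 y2) (beta (beta v))
  + D (alpha (alpha y1)) (alpha (alpha y2)) (D x1 x2 v).
Proof.
have rho_addl p q w : rho (p + q) w = rho p w + rho q w := linD (rho_linl w) p q.
rewrite (D_expand y1 y2) (D_expand (tr x1 x2 y1))
  (D_expand (alpha (alpha y1)) (tr x1 x2 y2))
  (D_expand (alpha (alpha y1)) (alpha (alpha y2))) ?(DD, DN).
rewrite (HR61 x1 x2 y2 y1) (HR61 x1 x2 y1 y2)
  (HR51 (alpha x1) (alpha x2) (br y1 y2)) (HR51 (alpha x1) (alpha x2) (alpha y1))
  (HR51 (alpha x1) (alpha x2) (alpha y2)) (HR51 x1 x2 y2) (HR51 x1 x2 y1)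
  HR02 HLY5 -!HLY02 !HLY01 rho_addl.
rewrite -(HR01 y2 v) -(HR01 (alpha y2)) -(HR01 y1 v) -(HR01 (alpha y1)) ?(rhoD, rhoN).
by zmodule_ring.
Qed.

Variable f : T -> V.
Hypothesis f_lin : lin f.
Hypothesis f_alpha : forall x, f (alpha x) = beta (f x).

Variables (nu : T -> T -> V) (omega : T -> T -> T -> V).
Hypothesis nu_cob : forall x1 x2,
  nu x1 x2 = rho x1 (f x2) - rho x2 (f x1) - f (br x1 x2).
Hypothesis omega_cob : forall x1 x2 x3,
  omega x1 x2 x3 = theta x2 x3 (f x1) - theta x1 x3 (f x2)
                 + D x1 x2 (f x3) - f (tr x1 x2 x3).

Let fD := linD f_lin.
Let f0 := lin0 f_lin.

Ltac expand_cob :=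
  rewrite ?nu_cob ?omega_cob !f_alpha ?(rhoD, rhoN, DD, DN, thetaD, thetaN).

Lemma coboundary_CC1 x1 x2 x3 :
    (omega x1 x2 x3 - rho (alpha x1) (nu x2 x3) + nu (br x1 x2) (alpha x3))
  + (omega x2 x3 x1 - rho (alpha x2) (nu x3 x1) + nu (br x2 x3) (alpha x1))
  + (omega x3 x1 x2 - rho (alpha x3) (nu x1 x2) + nu (br x3 x1) (alpha x2))
  = 0.
Proof.
expand_cob.
have f_HLY3 := congr1 f (HLY3 x1 x2 x3); rewrite !fD f0 in f_HLY3.
apply: (eq_of_sub_eq (congr_add (HR31 x1 x2 (f x3))
  (congr_add (HR31 x2 x3 (f x1)) (congr_add (HR31 x3 x1 (f x2)) (esym f_HLY3))))).
zmodule_ring.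
Qed.

Lemma coboundary_CC2 x1 x2 x3 y1 :
    (theta (alpha x1) (alpha y1) (nu x2 x3) + omega (br x1 x2) (alpha x3) (alpha y1))
  + (theta (alpha x2) (alpha y1) (nu x3 x1) + omega (br x2 x3) (alpha x1) (alpha y1))
  + (theta (alpha x3) (alpha y1) (nu x1 x2) + omega (br x3 x1) (alpha x2) (alpha y1))
  = 0.
Proof.
expand_cob.
have f_HLY4 := congr1 f (HLY4 x1 x2 x3 y1); rewrite !fD f0 in f_HLY4.
apply: (eq_of_sub_eq (congr_add (esym (HR42 x1 x2 y1 (f x3)))
  (congr_add (esym (HR42 x2 x3 y1 (f x1))) (congr_add (esym (HR42 x3 x1 y1 (f x2)))
  (congr_add (esym f_HLY4) (HR41 x1 x2 x3 (beta (f y1)))))))).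
zmodule_ring.
Qed.

Lemma coboundary_CC3 x1 x2 y1 y2 :
  omega (alpha x1) (alpha x2) (br y1 y2) + D (alpha x1) (alpha x2) (nu y1 y2)
  = nu (tr x1 x2 y1) (alpha (alpha y2)) + nu (alpha (alpha y1)) (tr x1 x2 y2)
  + rho (alpha (alpha y1)) (omega x1 x2 y2)
  - rho (alpha (alpha y2)) (omega x1 x2 y1).
Proof.
expand_cob.
have f_HLY5 := congr1 f (HLY5 x1 x2 y1 y2); rewrite !fD in f_HLY5.
apply: (eq_of_sub_eq (congr_add (HR52 x2 y1 y2 (f x1))
  (congr_add (esym (HR52 x1 y1 y2 (f x2))) (congr_add (HR51 x1 x2 y1 (f y2))
  (congr_add (esym f_HLY5) (esym (HR51 x1 x2 y2 (f y1)))))))).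
zmodule_ring.
Qed.

Lemma coboundary_CC4 x1 x2 y1 y2 y3 :
  omega (alpha (alpha x1)) (alpha (alpha x2)) (tr y1 y2 y3)
  + D (alpha (alpha x1)) (alpha (alpha x2)) (omega y1 y2 y3)
  = omega (tr x1 x2 y1) (alpha (alpha y2)) (alpha (alpha y3))
  + omega (alpha (alpha y1)) (tr x1 x2 y2) (alpha (alpha y3))
  + omega (alpha (alpha y1)) (alpha (alpha y2)) (tr x1 x2 y3)
  + theta (alpha (alpha y2)) (alpha (alpha y3)) (omega x1 x2 y1)
  - theta (alpha (alpha y1)) (alpha (alpha y3)) (omega x1 x2 y2)
  + D (alpha (alpha y1)) (alpha (alpha y2)) (omega x1 x2 y3).
Proof.
expand_cob.
have f_HLY6 := congr1 f (HLY6 x1 x2 y1 y2 y3); rewrite !fD in f_HLY6.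
apply: (eq_of_sub_eq (congr_add (HR62 x2 y1 y2 y3 (f x1))
  (congr_add (esym (HR62 x1 y1 y2 y3 (f x2))) (congr_add (HR61 x1 x2 y2 y3 (f y1))
  (congr_add (esym f_HLY6) (congr_add (esym (HR61 x1 x2 y1 y3 (f y2)))
  (D_comp_D x1 x2 y1 y2 (f y3)))))))).
zmodule_ring.
Qed.

End Coboundary.

Theorem proposition2p11 (K : closedFieldType)
  (hK2 : (2%:R : K) != 0) (hK3 : (3%:R : K) != 0)
  (T V : lmodType K) (alpha : T -> T) (br : T -> T -> T)
  (tr : T -> T -> T -> T) (beta : V -> V) (rho : T -> V -> V)
  (D theta : T -> T -> V -> V)
  (hT : is_HLYA alpha br tr)
  (hrep : is_rep alpha br tr beta rho D theta)
  (nu : T -> T -> V) (omega : T -> T -> T -> V) :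
  coboundary23 alpha br tr beta rho D theta nu omega ->
  cocycle23 alpha br tr beta rho D theta nu omega.
Proof.
move: hT => [_ [_ [_ [HLY01 [HLY02 [_ [_ [HLY3 [HLY4 [HLY5 HLY6]]]]]]]]]].
move: hrep => [_ [rho_lin [rho_linl [D_lin [_ [theta_lin [_
  [HR01 [HR02 [_ [HR31 [HR41 [HR42 [HR51 [HR52 [HR61 HR62]]]]]]]]]]]]]]]].
move=> [nuC2 [omegaC3 [f [f_lin [f_alpha [nu_cob omega_cob]]]]]].
do 2 split=> //; split; last split; last split;
  [eapply coboundary_CC1 | eapply coboundary_CC2 | eapply coboundary_CC3
  | eapply coboundary_CC4]; eassumption.
Qed.
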